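(* Let $k\in\mathbb{N}$ and let $A\subseteq\mathbb{N}$ with $\min(A)=0$ and $\max(A)\le k$. If $B$ and $D$ are different divisors of $A$, then $F(B)\cap F(D)=\emptyset$.
   Context: $\mathbb{N}=\{0,1,2,\ldots\}$, $[m]=\{0,1,\ldots,m\}$ (with $[m]=\emptyset$ for $m<0$). $S+T=\{s+t:s\in S,t\in T\}$. A set $B\subseteq\mathbb{N}$ is a divisor of $A$ if $B+C=A$ for some $C\subseteq\mathbb{N}$. For $A$ as in the claim and sets $X,Y$ with $X+Y=A$, define $Y_X=Y\cup\{s\in[k]\setminus A: s<\max(X)\}\cup\{s-\max(X): s\in[k]\setminus A,\ s\ge\max(X)\}$ ($k$-promotion). For a divisor $B$ of $A$, $F(B)$ is the set of subsets of $\mathbb{N}$ obtained as follows: for each $C\subseteq\mathbb{N}$ with $B+C=A$, if $\max(B)\le\max(C)$ then $B\in F(B)$, and if $\max(B)\ge\max(C)$ then $B_C\in F(B)$, where $B_C=B\cup\{s\in[k]\setminus A:s<\max(C)\}\cup\{s-\max(C):s\in[k]\setminus A,\ s\ge\max(C)\}$ (so if $\max(C)=\max(B)$ both $B$ and $B_C$ lie in $F(B)$). *)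

From mathcomp Require Import all_boot.
From mathcomp Require Import boolp classical_sets.
Set Implicit Arguments. Unset Strict Implicit. Unset Printing Implicit Defensive.
Local Open Scope classical_set_scope.

Definition sumset (S T : set nat) : set nat :=
  [set n | exists s t, S s /\ T t /\ n = (s + t)%N].

Definition is_divisor (A B : set nat) : Prop := exists C : set nat, sumset B C = A.

Definition is_max (S : set nat) (m : nat) : Prop := S m /\ forall s, S s -> (s <= m)%N.

(* max(S): the maximum of S (chosen classically; only used for sets that
   have a maximum, namely nonempty finite ones). *)
Definition smax (S : set nat) : nat := xget 0%N (is_max S).

Definition gaps (k : nat) (A : set nat) : set nat := [set s | (s <= k)%N /\ ~ A s].

Definition promote (k : nat) (A X Y : set nat) : set nat :=
  Y `|` [set s | gaps k A s /\ (s < smax X)%N]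
    `|` [set n | exists s, gaps k A s /\ (smax X <= s)%N /\ n = (s - smax X)%N].

Definition Ffam (k : nat) (A B : set nat) : set (set nat) :=
  [set X | exists C : set nat, sumset B C = A /\
     (((smax B <= smax C)%N /\ X = B) \/
      ((smax C <= smax B)%N /\ X = promote k A C B))].

From mathcomp Require Import all_boot.
From mathcomp Require Import boolp classical_sets.
From mathcomp Require Import zify.
Local Open Scope classical_set_scope.
Set Implicit Arguments. Unset Strict Implicit.

(* Every X in F(B) coming from a complement C gives B back as the set of
   x in X with x and x + max C in A: the elements added by promotion are gaps
   of A or gaps shifted down by max C.  Moreover max C is read off max X,
   as m - max X if X = B (then max C >= m/2) and as k - max X if X = B_C
   (then max C <= m/2), where m = max A = max B + max C; the two readings
   can only agree, so X determines B. *)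

Lemma is_max_uniq S m1 m2 : is_max S m1 -> is_max S m2 -> m1 = m2.
Proof. by move=> [S1 le1] [S2 le2]; apply/eqP; rewrite eqn_leq le1 ?le2. Qed.

Lemma smaxE S m : is_max S m -> smax S = m.
Proof. by move=> Sm; exact: is_max_uniq (xgetI _ Sm) Sm. Qed.

Lemma is_max_smax S b : S 0%N -> (forall s, S s -> (s <= b)%N) ->
  is_max S (smax S).
Proof.
move=> S0 Sb.
have exS : exists n, `[< S n >] by exists 0%N; exact/asboolP.
have ubS : forall n, `[< S n >] -> (n <= b)%N by move=> n /asboolP; exact: Sb.
case: (ex_maxnP exS ubS) => M /asboolP SM maxM.
suff SmaxM : is_max S M by rewrite (smaxE SmaxM).
by split=> // s /asboolP /maxM.
Qed.

Lemma sumset0 B C : sumset B C 0%N -> B 0%N /\ C 0%N.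
Proof.
move=> [s [t [Bs [Ct st0]]]].
have [s0 t0] : s = 0%N /\ t = 0%N by lia.
by subst s t.
Qed.

Lemma is_max_sumset B C b c :
  is_max B b -> is_max C c -> is_max (sumset B C) (b + c).
Proof.
move=> [Bb leb] [Cc lec]; split; first by exists b, c.
by move=> _ [s [t [Bs [Ct ->]]]]; apply: leq_add; [exact: leb | exact: lec].
Qed.

Definition recover (A X : set nat) (c : nat) : set nat :=
  [set x | X x /\ A x /\ A (x + c)%N].

Section Divisor.
Variables (A B C : set nat) (m : nat).
Hypotheses (A0 : A 0%N) (Am : is_max A m) (BC : sumset B C = A).

Let B0C0 : B 0%N /\ C 0%N. Proof. by apply: sumset0; rewrite BC. Qed.

Lemma divisor_sub : B `<=` A.
Proof.
by move=> x Bx; rewrite -BC; exists x, 0%N; rewrite addn0; have [_] := B0C0.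
Qed.

Lemma codivisor_sub : C `<=` A.
Proof. by move=> x Cx; rewrite -BC; exists 0%N, x; have [] := B0C0. Qed.

Lemma is_max_divisor : is_max B (smax B).
Proof. by apply: (is_max_smax B0C0.1) => s /divisor_sub; exact: Am.2. Qed.

Lemma is_max_codivisor : is_max C (smax C).
Proof. by apply: (is_max_smax B0C0.2) => s /codivisor_sub; exact: Am.2. Qed.

Lemma smax_divisorD : (smax B + smax C)%N = m.
Proof.
apply: (is_max_uniq _ Am); rewrite -BC.
exact: is_max_sumset is_max_divisor is_max_codivisor.
Qed.

Lemma recover_divisor : recover A B (smax C) = B.
Proof.
rewrite predeqE => x; split; first by case.
move=> Bx; split=> //; split; first exact: divisor_sub.
by rewrite -BC; exists x, (smax C); have [] := is_max_codivisor.
Qed.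

Lemma recover_promote k : recover A (promote k A C B) (smax C) = B.
Proof.
rewrite -[RHS]recover_divisor predeqE => x; split.
  move=> [[[Bx | [[_ nAx] _]] | [s [[_ nAs] [Cs xs]]]] [Ax AxC]] //.
  have sxC : s = (x + smax C)%N by lia.
  by case: nAs; rewrite sxC.
by move=> [Bx ABx]; split=> //; left; left.
Qed.

Lemma smax_promote k : (m <= k)%N -> (smax C <= smax B)%N ->
  smax (promote k A C B) = (k - smax C)%N.
Proof.
move=> mk CB; apply: smaxE.
have [Bb leB] := is_max_divisor; have BCm := smax_divisorD.
split.
  have [Ak | nAk] := pselect (A k).
    have km : k = m by have := Am.2 _ Ak; lia.
    by left; left; have -> : (k - smax C)%N = smax B by lia.
  by right; exists k; split; [split | split; lia].
by move=> s [[/leB | [_]] | [t [[tk _] [_ ->]]]]; lia.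
Qed.

End Divisor.

Lemma Ffam_recover A B m k X :
  A 0%N -> is_max A m -> (m <= k)%N -> Ffam k A B X ->
  exists c, B = recover A X c /\
    ((c = m - smax X /\ m <= c.*2) \/ (c = k - smax X /\ c.*2 <= m))%N.
Proof.
move=> A0 Am mk [E [BE [[BEle ->] | [EBle ->]]]]; exists (smax E);
  have sumBE := smax_divisorD A0 Am BE.
- by rewrite (recover_divisor A0 Am BE); split=> //; left; lia.
- rewrite (recover_promote A0 Am BE k) (smax_promote A0 Am BE mk EBle).
  by split=> //; right; lia.
Qed.

Theorem mainTheorem5 (k : nat) (A : set nat) :
  A 0%N ->
  (exists m, is_max A m /\ (m <= k)%N) ->
  forall B D : set nat, is_divisor A B -> is_divisor A D -> B <> D ->
  Ffam k A B `&` Ffam k A D = set0.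
Proof.
move=> A0 [m [Am mk]] B D _ _ BD.
rewrite -subset0 => X [FBX FDX]; apply: BD.
have [c [-> c_spec]] := Ffam_recover A0 Am mk FBX.
have [d [-> d_spec]] := Ffam_recover A0 Am mk FDX.
by have -> : c = d by lia.
Qed.
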